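(* Let $R$ be a t-unital ring and $F$ a t-unital (left or right) $R$-module. Then $F$ is t-flat if and only if it is a flat unital $\widetilde R$-module, where $\widetilde R=\mathbb Z\oplus R$ is the unitalization of $R$.
   Context: Rings are associative, not necessarily unital; modules are not assumed unital, and nonunital $R$-modules are the same as unital modules over $\widetilde R=\mathbb Z\oplus R$ (the ring with a formally adjoined unit, $R$ a two-sided ideal). $R$ is t-unital if $R\otimes_R R\to R$ is an isomorphism; a left module $M$ is t-unital if $R\otimes_R M\to M$ is an isomorphism, a right module $N$ if $N\otimes_R R\to N$ is an isomorphism. For t-unital $R$, the categories of t-unital left modules and of t-unital right modules are abelian. A left $R$-module $F$ is t-flat if ${-}\otimes_R F$, from t-unital right $R$-modules to abelian groups, takes kernels computed in the category of t-unital right $R$-modules to kernels of abelian groups; a right $R$-module $F$ is t-flat if $F\otimes_R{-}$, from t-unital left $R$-modules to abelian groups, takes kernels computed in the category of t-unital left $R$-modules to kernels of abelian groups. *)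

From HB Require Import structures.
From mathcomp Require Import all_boot all_order all_algebra.
Set Implicit Arguments. Unset Strict Implicit. Unset Printing Implicit Defensive.
Import GRing.Theory.
Local Open Scope ring_scope.

Definition nuring_axioms (R : zmodType) (mul : R -> R -> R) : Prop :=
  associative mul /\ left_distributive mul +%R /\ right_distributive mul +%R.

Definition lmod_axioms (R : zmodType) (mul : R -> R -> R)
    (M : zmodType) (am : R -> M -> M) : Prop :=
  [/\ forall r s m, am (mul r s) m = am r (am s m),
      forall r m1 m2, am r (m1 + m2) = am r m1 + am r m2 &
      forall r1 r2 m, am (r1 + r2) m = am r1 m + am r2 m].

Definition rmod_axioms (R : zmodType) (mul : R -> R -> R)
    (N : zmodType) (an : N -> R -> N) : Prop :=
  [/\ forall n r s, an n (mul r s) = an (an n r) s,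
      forall n1 n2 r, an (n1 + n2) r = an n1 r + an n2 r &
      forall n r1 r2, an n (r1 + r2) = an n r1 + an n r2].

Definition lmod_morph (R : Type) (M1 M2 : zmodType)
    (a1 : R -> M1 -> M1) (a2 : R -> M2 -> M2) (f : M1 -> M2) : Prop :=
  (forall x y, f (x + y) = f x + f y) /\ (forall r x, f (a1 r x) = a2 r (f x)).

Definition rmod_morph (R : Type) (N1 N2 : zmodType)
    (a1 : N1 -> R -> N1) (a2 : N2 -> R -> N2) (f : N1 -> N2) : Prop :=
  (forall x y, f (x + y) = f x + f y) /\ (forall x r, f (a1 x r) = a2 (f x) r).

(* Tensor product N (x)_R M of a right module N and a left module M.
   Elements are represented by formal sums  sum_i n_i (x) m_i  (lists of pairs);
   [tens_eq an am s t] says that s and t represent the same element of N (x)_R M.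
   It is the congruence (for concatenation) generated by commutativity and the
   defining relations of the tensor product, i.e. the commutative-monoid
   presentation of N (x)_R M (which is a group, since (n (x) m)+(-n (x) m) = 0). *)
Section Tensor.
Variables (R : Type) (N M : zmodType) (an : N -> R -> N) (am : R -> M -> M).

Inductive tens_eq : seq (N * M) -> seq (N * M) -> Prop :=
| te_refl s : tens_eq s s
| te_sym s t : tens_eq s t -> tens_eq t s
| te_trans s t u : tens_eq s t -> tens_eq t u -> tens_eq s u
| te_cat s1 s2 t1 t2 :
    tens_eq s1 t1 -> tens_eq s2 t2 -> tens_eq (s1 ++ s2) (t1 ++ t2)
| te_comm s t : tens_eq (s ++ t) (t ++ s)
| te_zero m : tens_eq [:: (0, m)] [::]
| te_addl n1 n2 m : tens_eq [:: (n1 + n2, m)] [:: (n1, m); (n2, m)]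
| te_addr n m1 m2 : tens_eq [:: (n, m1 + m2)] [:: (n, m1); (n, m2)]
| te_bal n r m : tens_eq [:: (an n r, m)] [:: (n, am r m)].

End Tensor.

Definition tmapl (N1 N2 M : Type) (f : N1 -> N2) (s : seq (N1 * M)) :
  seq (N2 * M) := map (fun p => (f p.1, p.2)) s.
Definition tmapr (N M1 M2 : Type) (g : M1 -> M2) (s : seq (N * M1)) :
  seq (N * M2) := map (fun p => (p.1, g p.2)) s.

(* t-unitality: the multiplication map R (x)_R M -> M (resp. N (x)_R R -> N)
   is an isomorphism of abelian groups (surjective and with zero kernel). *)
Definition tunital_lmod (R : zmodType) (mul : R -> R -> R)
    (M : zmodType) (am : R -> M -> M) : Prop :=
  (forall m : M, exists s : seq (R * M), m = \sum_(p <- s) am p.1 p.2) /\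
  (forall s : seq (R * M), \sum_(p <- s) am p.1 p.2 = 0 -> tens_eq mul am s [::]).

Definition tunital_rmod (R : zmodType) (mul : R -> R -> R)
    (N : zmodType) (an : N -> R -> N) : Prop :=
  (forall n : N, exists s : seq (N * R), n = \sum_(p <- s) an p.1 p.2) /\
  (forall s : seq (N * R), \sum_(p <- s) an p.1 p.2 = 0 -> tens_eq an mul s [::]).

Definition tunital_ring (R : zmodType) (mul : R -> R -> R) : Prop :=
  tunital_lmod mul mul.

Definition is_tkernel_r (R : zmodType) (mul : R -> R -> R)
    (K N1 N2 : zmodType) (aK : K -> R -> K) (a1 : N1 -> R -> N1)
    (k : K -> N1) (f : N1 -> N2) : Prop :=
  (forall x, f (k x) = 0) /\
  forall (L : zmodType) (aL : L -> R -> L) (g : L -> N1),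
    rmod_axioms mul aL -> tunital_rmod mul aL -> rmod_morph aL a1 g ->
    (forall x, f (g x) = 0) ->
    exists h : L -> K, [/\ rmod_morph aL aK h, (forall x, k (h x) = g x) &
      forall h' : L -> K, rmod_morph aL aK h' -> (forall x, k (h' x) = g x) ->
        forall x, h' x = h x].

Definition is_tkernel_l (R : zmodType) (mul : R -> R -> R)
    (K M1 M2 : zmodType) (aK : R -> K -> K) (a1 : R -> M1 -> M1)
    (k : K -> M1) (f : M1 -> M2) : Prop :=
  (forall x, f (k x) = 0) /\
  forall (L : zmodType) (aL : R -> L -> L) (g : L -> M1),
    lmod_axioms mul aL -> tunital_lmod mul aL -> lmod_morph aL a1 g ->
    (forall x, f (g x) = 0) ->
    exists h : L -> K, [/\ lmod_morph aL aK h, (forall x, k (h x) = g x) &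
      forall h' : L -> K, lmod_morph aL aK h' -> (forall x, k (h' x) = g x) ->
        forall x, h' x = h x].

(* t-flat left module F: - (x)_R F takes kernels in the category of t-unital
   right modules to kernels of abelian groups. *)
Definition tflat_l (R : zmodType) (mul : R -> R -> R)
    (F : zmodType) (aF : R -> F -> F) : Prop :=
  forall (K N1 N2 : zmodType) (aK : K -> R -> K) (a1 : N1 -> R -> N1)
         (a2 : N2 -> R -> N2) (k : K -> N1) (f : N1 -> N2),
    rmod_axioms mul aK -> rmod_axioms mul a1 -> rmod_axioms mul a2 ->
    tunital_rmod mul aK -> tunital_rmod mul a1 -> tunital_rmod mul a2 ->
    rmod_morph aK a1 k -> rmod_morph a1 a2 f ->
    is_tkernel_r mul aK a1 k f ->
    [/\ forall t, tens_eq a2 aF (tmapl f (tmapl k t)) [::],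
        forall t, tens_eq a1 aF (tmapl k t) [::] -> tens_eq aK aF t [::] &
        forall s, tens_eq a2 aF (tmapl f s) [::] ->
          exists t, tens_eq a1 aF (tmapl k t) s].

Definition tflat_r (R : zmodType) (mul : R -> R -> R)
    (F : zmodType) (aF : F -> R -> F) : Prop :=
  forall (K M1 M2 : zmodType) (aK : R -> K -> K) (a1 : R -> M1 -> M1)
         (a2 : R -> M2 -> M2) (k : K -> M1) (f : M1 -> M2),
    lmod_axioms mul aK -> lmod_axioms mul a1 -> lmod_axioms mul a2 ->
    tunital_lmod mul aK -> tunital_lmod mul a1 -> tunital_lmod mul a2 ->
    lmod_morph aK a1 k -> lmod_morph a1 a2 f ->
    is_tkernel_l mul aK a1 k f ->
    [/\ forall t, tens_eq aF a2 (tmapr f (tmapr k t)) [::],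
        forall t, tens_eq aF a1 (tmapr k t) [::] -> tens_eq aF aK t [::] &
        forall s, tens_eq aF a2 (tmapr f s) [::] ->
          exists t, tens_eq aF a1 (tmapr k t) s].

(* Flatness over a unital ring (S, smul, one): tensoring with F is exact, i.e.
   takes kernels (in the category of unital modules: injective maps onto the
   kernel) to kernels of abelian groups. *)
Definition flat_l (S : zmodType) (smul : S -> S -> S) (one : S)
    (F : zmodType) (aF : S -> F -> F) : Prop :=
  forall (K N1 N2 : zmodType) (aK : K -> S -> K) (a1 : N1 -> S -> N1)
         (a2 : N2 -> S -> N2) (k : K -> N1) (f : N1 -> N2),
    rmod_axioms smul aK -> rmod_axioms smul a1 -> rmod_axioms smul a2 ->
    (forall x, aK x one = x) -> (forall x, a1 x one = x) -> (forall x, a2 x one = x) ->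
    rmod_morph aK a1 k -> rmod_morph a1 a2 f ->
    injective k -> (forall y, f y = 0 <-> exists x, y = k x) ->
    [/\ forall t, tens_eq a2 aF (tmapl f (tmapl k t)) [::],
        forall t, tens_eq a1 aF (tmapl k t) [::] -> tens_eq aK aF t [::] &
        forall s, tens_eq a2 aF (tmapl f s) [::] ->
          exists t, tens_eq a1 aF (tmapl k t) s].

Definition flat_r (S : zmodType) (smul : S -> S -> S) (one : S)
    (F : zmodType) (aF : F -> S -> F) : Prop :=
  forall (K M1 M2 : zmodType) (aK : S -> K -> K) (a1 : S -> M1 -> M1)
         (a2 : S -> M2 -> M2) (k : K -> M1) (f : M1 -> M2),
    lmod_axioms smul aK -> lmod_axioms smul a1 -> lmod_axioms smul a2 ->
    (forall x, aK one x = x) -> (forall x, a1 one x = x) -> (forall x, a2 one x = x) ->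
    lmod_morph aK a1 k -> lmod_morph a1 a2 f ->
    injective k -> (forall y, f y = 0 <-> exists x, y = k x) ->
    [/\ forall t, tens_eq aF a2 (tmapr f (tmapr k t)) [::],
        forall t, tens_eq aF a1 (tmapr k t) [::] -> tens_eq aF aK t [::] &
        forall s, tens_eq aF a2 (tmapr f s) [::] ->
          exists t, tens_eq aF a1 (tmapr k t) s].

Definition unitz (R : zmodType) : zmodType := (int * R)%type.

Definition rt_mul (R : zmodType) (mul : R -> R -> R) (x y : unitz R) : unitz R :=
  (x.1 * y.1, y.2 *~ x.1 + x.2 *~ y.1 + mul x.2 y.2).

Definition rt_one (R : zmodType) : unitz R := (1, 0).

Definition rt_lact (R : zmodType) (M : zmodType) (am : R -> M -> M)
    (x : unitz R) (m : M) : M := m *~ x.1 + am x.2 m.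
Definition rt_ract (R : zmodType) (N : zmodType) (an : N -> R -> N)
    (n : N) (x : unitz R) : N := n *~ x.1 + an n x.2.

(** Write [T N] for [N (x)_R R].  For a t-unital left module [F] the
    associativity map [T N (x)_R F -> N (x)_R F] is a natural isomorphism, so
    [- (x)_R F] factors through [T].  The functor [T] turns a kernel of [f]
    (computed among all modules) into a kernel of [T f] among t-unital modules,
    and [T N] is t-unital because [R] is; conversely, a t-unital kernel of [f]
    maps to the honest kernel of [f] by a map which [T], hence [- (x)_R F],
    makes invertible.  Since [- (x)_R~ F] and [- (x)_R F] agree, exactness of
    [- (x)_R F] on t-unital kernels and on all kernels are equivalent.  Right
    modules are left modules over the converse ring, whose unitalization is the
    converse of [R~]. *)

From HB Require Import structures.
From mathcomp Require Import all_boot all_order all_algebra.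
From mathcomp Require Import boolp.
Set Implicit Arguments. Unset Strict Implicit. Unset Printing Implicit Defensive.
Import GRing.Theory.
Local Open Scope ring_scope.

Section AdditiveMaps.
Variables (U V : zmodType) (f : U -> V).
Hypothesis fD : {morph f : x y / x + y}.

Lemma addmorph0 : f 0 = 0.
Proof. by apply: (@addrI _ (f 0)); rewrite -fD !addr0. Qed.

Lemma addmorphN x : f (- x) = - f x.
Proof. by apply: (@addrI _ (f x)); rewrite -fD !subrr addmorph0. Qed.

Lemma addmorph_sum (I : Type) (s : seq I) (F : I -> U) :
  f (\sum_(i <- s) F i) = \sum_(i <- s) f (F i).
Proof. exact: (big_morph f fD addmorph0). Qed.

Lemma addmorphMz x z : f (x *~ z) = f x *~ z.
Proof.
have fMn n : f (x *+ n) = f x *+ n.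
  by elim: n => [|n IH]; rewrite ?mulr0n ?addmorph0 // !mulrS fD IH.
by case: z => n; rewrite ?NegzE ?mulrNz ?addmorphN -!pmulrn fMn.
Qed.

End AdditiveMaps.

Lemma addmorph_comp (U V W : zmodType) (f : U -> V) (g : V -> W) :
  {morph f : x y / x + y} -> {morph g : x y / x + y} ->
  {morph (fun x => g (f x)) : x y / x + y}.
Proof. by move=> fD gD x y; rewrite fD gD. Qed.

Section TensorGroup.
Variables (R : Type) (N M : zmodType) (an : N -> R -> N) (am : R -> M -> M).
Local Notation teq := (tens_eq an am).

Lemma te_catl s1 s2 t : teq s1 s2 -> teq (s1 ++ t) (s2 ++ t).
Proof. by move=> e; apply: te_cat => //; apply: te_refl. Qed.

Lemma te_catr s t1 t2 : teq t1 t2 -> teq (s ++ t1) (s ++ t2).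
Proof. by move=> e; apply: te_cat => //; apply: te_refl. Qed.

Definition formal_opp (s : seq (N * M)) := map (fun p => (- p.1, p.2)) s.

Lemma te_formal_oppl s : teq (formal_opp s ++ s) [::].
Proof.
elim: s => [|[n m] s IH] /=; first exact: te_refl.
have pair0 : teq [:: (- n, m); (n, m)] [::].
  by apply: te_trans (te_sym (te_addl _ _ _ _ _)) _; rewrite addNr; apply: te_zero.
have -> : (- n, m) :: formal_opp s ++ (n, m) :: s =
    [:: (- n, m)] ++ ((formal_opp s ++ [:: (n, m)]) ++ s) by rewrite -catA.
apply: te_trans (te_catr _ (te_catl _ (te_comm _ _ _ _))) _.
by rewrite -catA catA; apply: te_cat pair0 IH.
Qed.

(** [N (x)_R M] is encoded as the type of chosen representatives of the
    [tens_eq]-classes of formal sums. *)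
Lemma tens_repr_ex s : exists t, `[< teq s t >].
Proof. by exists s; apply/asboolP; apply: te_refl. Qed.

Definition tens_repr s := xchoose (tens_repr_ex s).

Lemma tens_reprP s : teq s (tens_repr s).
Proof. exact/asboolP/(xchooseP (tens_repr_ex s)). Qed.

Lemma tens_repr_eq s t : teq s t -> tens_repr s = tens_repr t.
Proof.
move=> st; apply: eq_xchoose => u; apply/asboolP/asboolP => e.
  exact: te_trans (te_sym st) e.
exact: te_trans st e.
Qed.

Lemma tens_reprK s : tens_repr (tens_repr s) = tens_repr s.
Proof. exact/tens_repr_eq/te_sym/tens_reprP. Qed.

Definition tensor := {s : seq (N * M) | tens_repr s == s}.
HB.instance Definition _ := Choice.on tensor.

Definition tens_of s : tensor := exist _ (tens_repr s) (introT eqP (tens_reprK s)).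

Lemma tens_ofP s : teq (val (tens_of s)) s.
Proof. exact/te_sym/tens_reprP. Qed.

Lemma tens_of_eq s t : teq s t -> tens_of s = tens_of t.
Proof. by move=> st; apply: val_inj; apply: tens_repr_eq. Qed.

Lemma tens_of_inj s t : tens_of s = tens_of t -> teq s t.
Proof.
move=> /(congr1 val) /= e; apply: te_trans (tens_reprP s) _.
by rewrite e; apply/te_sym/tens_reprP.
Qed.

Lemma tens_ofK : cancel val tens_of.
Proof. by move=> q; apply: val_inj; apply/eqP/(valP q). Qed.

Definition tens_add (a b : tensor) := tens_of (val a ++ val b).
Definition tens_opp (a : tensor) := tens_of (formal_opp (val a)).
Definition tens_zero := tens_of [::].

Lemma tens_addA : associative tens_add.
Proof.
move=> a b c; apply: tens_of_eq; apply: te_trans (te_catr _ (tens_ofP _)) _.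
by rewrite catA; apply: te_catl; apply/te_sym/tens_ofP.
Qed.

Lemma tens_addC : commutative tens_add.
Proof. by move=> a b; apply: tens_of_eq; apply: te_comm. Qed.

Lemma tens_add0 : left_id tens_zero tens_add.
Proof. by move=> a; rewrite -[RHS]tens_ofK; apply/tens_of_eq/(te_catl _ (tens_ofP _)). Qed.

Lemma tens_addN : left_inverse tens_zero tens_opp tens_add.
Proof.
move=> a; apply: tens_of_eq; apply: te_trans (te_catl _ (tens_ofP _)) _.
exact: te_formal_oppl.
Qed.

HB.instance Definition _ :=
  GRing.isZmodule.Build tensor tens_addA tens_addC tens_add0 tens_addN.

Lemma tens_of_cat s t : tens_of (s ++ t) = tens_of s + tens_of t.
Proof. by apply: tens_of_eq; apply: te_sym; apply: te_cat; apply: tens_ofP. Qed.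

Lemma tens_of_eq0 s : tens_of s = 0 <-> teq s [::].
Proof. by rewrite -[0]/(tens_of [::]); split=> [/tens_of_inj | /tens_of_eq]. Qed.

Definition tens n m : tensor := tens_of [:: (n, m)].

Lemma tens_of_sum s : tens_of s = \sum_(p <- s) tens p.1 p.2.
Proof.
elim: s => [|[n m] s IH]; first by rewrite big_nil.
by rewrite big_cons -IH -tens_of_cat.
Qed.

Lemma tensor_sum q : q = \sum_(p <- val q) tens p.1 p.2.
Proof. by rewrite -tens_of_sum tens_ofK. Qed.

Lemma tensDl n1 n2 m : tens (n1 + n2) m = tens n1 m + tens n2 m.
Proof. by rewrite -tens_of_cat; apply: tens_of_eq; apply: te_addl. Qed.

Lemma tensDr n m1 m2 : tens n (m1 + m2) = tens n m1 + tens n m2.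
Proof. by rewrite -tens_of_cat; apply: tens_of_eq; apply: te_addr. Qed.

Lemma tens_bal n r m : tens (an n r) m = tens n (am r m).
Proof. exact/tens_of_eq/te_bal. Qed.

Lemma tens0l m : tens 0 m = 0.
Proof. exact/tens_of_eq/te_zero. Qed.

Lemma tens0r n : tens n 0 = 0.
Proof. exact: addmorph0 (tensDr n). Qed.

Lemma tensMz n z m : tens (n *~ z) m = tens n (m *~ z).
Proof.
by rewrite (addmorphMz (fun x y => tensDl x y m)) (addmorphMz (tensDr n)).
Qed.

Definition balanced (V : zmodType) (phi : N -> M -> V) :=
  [/\ forall n1 n2 m, phi (n1 + n2) m = phi n1 m + phi n2 m,
      forall n m1 m2, phi n (m1 + m2) = phi n m1 + phi n m2 &
      forall n r m, phi (an n r) m = phi n (am r m)].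

Section Lift.
Variables (V : zmodType) (phi : N -> M -> V).
Hypothesis phiB : balanced phi.

Lemma te_balanced_sum s t :
  teq s t -> \sum_(p <- s) phi p.1 p.2 = \sum_(p <- t) phi p.1 p.2.
Proof.
have [phiDl phiDr phi_bal] := phiB.
elim=> {s t} //.
- by move=> s t u _ -> _ ->.
- by move=> s1 s2 t1 t2 _ e1 _ e2; rewrite !big_cat e1 e2.
- by move=> s t; rewrite !big_cat [X in X = _]addrC.
- by move=> m; rewrite big_seq1 big_nil (addmorph0 (fun x y => phiDl x y m)).
- by move=> n1 n2 m; rewrite big_seq1 !big_cons big_nil addr0 phiDl.
- by move=> n m1 m2; rewrite big_seq1 !big_cons big_nil addr0 phiDr.
- by move=> n r m; rewrite !big_seq1 phi_bal.
Qed.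

Definition tens_lift (q : tensor) : V := \sum_(p <- val q) phi p.1 p.2.

Lemma tens_lift_of s : tens_lift (tens_of s) = \sum_(p <- s) phi p.1 p.2.
Proof. exact/te_balanced_sum/tens_ofP. Qed.

Lemma tens_lift_tens n m : tens_lift (tens n m) = phi n m.
Proof. by rewrite tens_lift_of big_seq1. Qed.

Lemma tens_liftD : {morph tens_lift : x y / x + y}.
Proof.
by move=> x y; rewrite -[x]tens_ofK -[y]tens_ofK -tens_of_cat !tens_lift_of big_cat.
Qed.

End Lift.

Lemma tensor_ext (V : zmodType) (f g : tensor -> V) :
  {morph f : x y / x + y} -> {morph g : x y / x + y} ->
  (forall n m, f (tens n m) = g (tens n m)) -> f =1 g.
Proof.
move=> fD gD e q; rewrite (tensor_sum q) (addmorph_sum fD) (addmorph_sum gD).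
by apply: eq_bigr => p _; apply: e.
Qed.

End TensorGroup.

Section ModuleAxioms.
Variables (R : zmodType) (mul : R -> R -> R).

Lemma rmod_actA (N : zmodType) (an : N -> R -> N) :
  rmod_axioms mul an -> forall n r s, an n (mul r s) = an (an n r) s.
Proof. by case. Qed.

Lemma rmod_actDl (N : zmodType) (an : N -> R -> N) :
  rmod_axioms mul an -> forall r, {morph an^~ r : x y / x + y}.
Proof. by case=> _ anD _ r x y; apply: anD. Qed.

Lemma rmod_actDr (N : zmodType) (an : N -> R -> N) :
  rmod_axioms mul an -> forall n, {morph an n : x y / x + y}.
Proof. by case. Qed.

Lemma lmod_actA (M : zmodType) (am : R -> M -> M) :
  lmod_axioms mul am -> forall r s m, am (mul r s) m = am r (am s m).
Proof. by case. Qed.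

Lemma lmod_actDl (M : zmodType) (am : R -> M -> M) :
  lmod_axioms mul am -> forall m, {morph am^~ m : x y / x + y}.
Proof. by case=> _ _ amD m x y; apply: amD. Qed.

Lemma lmod_actDr (M : zmodType) (am : R -> M -> M) :
  lmod_axioms mul am -> forall r, {morph am r : x y / x + y}.
Proof. by case. Qed.

Lemma rmod_balanced (N : zmodType) (an : N -> R -> N) :
  rmod_axioms mul an -> balanced an mul an.
Proof. by case=> anA anDl anDr; split=> // n r s; rewrite anA. Qed.

Lemma rmod_morph_comp (N1 N2 N3 : zmodType) (a1 : N1 -> R -> N1)
    (a2 : N2 -> R -> N2) (a3 : N3 -> R -> N3) (g1 : N1 -> N2) (g2 : N2 -> N3) :
  rmod_morph a1 a2 g1 -> rmod_morph a2 a3 g2 -> rmod_morph a1 a3 (fun x => g2 (g1 x)).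
Proof. by case=> g1D g1A [g2D g2A]; split=> *; rewrite ?g1D ?g2D ?g1A ?g2A. Qed.

End ModuleAxioms.

Section TensorR.
Variables (R : zmodType) (mul : R -> R -> R).
Hypothesis HR : nuring_axioms mul.

Lemma nuring_lmod : lmod_axioms mul mul.
Proof. by case: HR => mulA [mulDl mulDr]; split=> *; rewrite ?mulA ?mulDl ?mulDr. Qed.

Definition tensR (N : zmodType) (an : N -> R -> N) := tensor an mul.

Definition tensR_act (N : zmodType) (an : N -> R -> N) (q : tensR an) (r : R) :=
  tens_lift (fun n s => tens an mul n (mul s r)) q.

Definition tensR_mul (N : zmodType) (an : N -> R -> N) (q : tensR an) : N :=
  tens_lift an q.

Definition tmap (N1 N2 M : zmodType) (a1 : N1 -> R -> N1) (a2 : N2 -> R -> N2)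
    (am : R -> M -> M) (g : N1 -> N2) (q : tensor a1 am) : tensor a2 am :=
  tens_lift (fun n m => tens a2 am (g n) m) q.

Section TensorRModule.
Variables (N : zmodType) (an : N -> R -> N).
Implicit Types q : tensR an.

Fact tensR_act_balanced r : balanced an mul (fun n s => tens an mul n (mul s r)).
Proof.
have [mulA [mulDl _]] := HR.
by split=> *; rewrite ?tensDl ?mulDl ?tensDr ?tens_bal ?mulA.
Qed.

Lemma tensR_act_tens n s r : tensR_act (tens an mul n s) r = tens an mul n (mul s r).
Proof. exact: tens_lift_tens (tensR_act_balanced r) n s. Qed.

Lemma tensR_actDl r : {morph (@tensR_act N an)^~ r : x y / x + y}.
Proof. exact: tens_liftD (tensR_act_balanced r). Qed.

Lemma tensR_actDr q : {morph tensR_act q : x y / x + y}.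
Proof.
move=> r1 r2; move: q; apply: tensor_ext.
- exact: tensR_actDl.
- by move=> x y; rewrite !tensR_actDl addrACA.
- by have [_ [_ mulDr]] := HR; move=> n m; rewrite !tensR_act_tens mulDr tensDr.
Qed.

Lemma tensR_act_rmod : rmod_axioms mul (@tensR_act N an).
Proof.
split=> [q r s||q r1 r2]; last exact: tensR_actDr.
- move: q; apply: tensor_ext.
  + exact: tensR_actDl.
  + exact: addmorph_comp (tensR_actDl r) (tensR_actDl s).
  + by have [mulA _] := HR; move=> n m; rewrite !tensR_act_tens mulA.
- by move=> x y r; apply: tensR_actDl.
Qed.

Hypothesis HN : rmod_axioms mul an.

Lemma tensR_mul_tens n s : tensR_mul (tens an mul n s) = an n s.
Proof. exact: tens_lift_tens (rmod_balanced HN) n s. Qed.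

Lemma tensR_mulD : {morph @tensR_mul N an : x y / x + y}.
Proof. exact: tens_liftD (rmod_balanced HN). Qed.

Lemma tensR_mul_of s : tensR_mul (tens_of an mul s) = \sum_(p <- s) an p.1 p.2.
Proof. exact: tens_lift_of (rmod_balanced HN) s. Qed.

Lemma tensR_mul_act q r : tensR_mul (tensR_act q r) = an (tensR_mul q) r.
Proof.
move: q; apply: tensor_ext.
- exact: addmorph_comp (tensR_actDl r) tensR_mulD.
- exact: addmorph_comp tensR_mulD (rmod_actDl HN r).
- by move=> n m; rewrite tensR_act_tens !tensR_mul_tens (rmod_actA HN).
Qed.

Lemma tens_tensR_mul q r : tens an mul (tensR_mul q) r = tensR_act q r.
Proof.
move: q; apply: tensor_ext.
- exact: addmorph_comp tensR_mulD (fun x y => tensDl _ _ x y r).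
- exact: tensR_actDl.
- by move=> n m; rewrite tensR_act_tens tensR_mul_tens tens_bal.
Qed.

Lemma tensR_mul_morph : rmod_morph (@tensR_act N an) an (@tensR_mul N an).
Proof. by split; [apply: tensR_mulD | apply: tensR_mul_act]. Qed.

End TensorRModule.

Section TensorMap.
Variables (N1 N2 M : zmodType) (a1 : N1 -> R -> N1) (a2 : N2 -> R -> N2).
Variables (am : R -> M -> M) (g : N1 -> N2).
Hypothesis Hg : rmod_morph a1 a2 g.

Fact tmap_balanced : balanced a1 am (fun n m => tens a2 am (g n) m).
Proof.
have [gD gA] := Hg.
by split=> *; rewrite ?gD ?tensDl ?tensDr ?gA ?tens_bal.
Qed.

Lemma tmap_tens n m : tmap a2 g (tens a1 am n m) = tens a2 am (g n) m.
Proof. exact: tens_lift_tens tmap_balanced n m. Qed.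

Lemma tmapD : {morph (tmap a2 g : tensor a1 am -> _) : x y / x + y}.
Proof. exact: tens_liftD tmap_balanced. Qed.

Lemma tmap_of s : tmap a2 g (tens_of a1 am s) = tens_of a2 am (tmapl g s).
Proof.
by rewrite [LHS](tens_lift_of tmap_balanced) tens_of_sum big_map.
Qed.

End TensorMap.

Section TensorRMap.
Variables (N1 N2 : zmodType) (a1 : N1 -> R -> N1) (a2 : N2 -> R -> N2).
Variables (g : N1 -> N2).
Hypothesis Hg : rmod_morph a1 a2 g.
Implicit Types q : tensR a1.

Lemma tmap_act q r : tmap a2 g (tensR_act q r) = tensR_act (tmap a2 g q) r.
Proof.
move: q; apply: tensor_ext.
- exact: addmorph_comp (tensR_actDl r) (tmapD Hg).
- exact: addmorph_comp (tmapD Hg) (tensR_actDl r).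
- by move=> n m; rewrite tensR_act_tens !tmap_tens // tensR_act_tens.
Qed.

Lemma tmap_morph : rmod_morph (@tensR_act N1 a1) (@tensR_act N2 a2) (tmap a2 g).
Proof. by split; [apply: tmapD | apply: tmap_act]. Qed.

Hypotheses (H1 : rmod_axioms mul a1) (H2 : rmod_axioms mul a2).

Lemma tensR_mul_tmap q : tensR_mul (tmap a2 g q) = g (tensR_mul q).
Proof.
move: q; apply: tensor_ext.
- exact: addmorph_comp (tmapD Hg) (tensR_mulD H2).
- exact: addmorph_comp (tensR_mulD H1) Hg.1.
- by move=> n m; rewrite tmap_tens // !tensR_mul_tens // Hg.2.
Qed.

End TensorRMap.

Lemma tmap_comp (N1 N2 N3 M : zmodType) (a1 : N1 -> R -> N1) (a2 : N2 -> R -> N2)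
    (a3 : N3 -> R -> N3) (am : R -> M -> M) (g1 : N1 -> N2) (g2 : N2 -> N3)
    (g3 : N1 -> N3) :
  rmod_morph a1 a2 g1 -> rmod_morph a2 a3 g2 -> rmod_morph a1 a3 g3 ->
  (forall x, g2 (g1 x) = g3 x) ->
  forall q : tensor a1 am, tmap a3 g2 (tmap a2 g1 q) = tmap a3 g3 q.
Proof.
move=> Hg1 Hg2 Hg3 e; apply: tensor_ext.
- exact: addmorph_comp (tmapD Hg1) (tmapD Hg2).
- exact: tmapD Hg3.
- by move=> n m; rewrite !tmap_tens // e.
Qed.

End TensorR.

Lemma tunital_lmod_tens_eq (R : zmodType) (mul : R -> R -> R) (M : zmodType)
    (am : R -> M -> M) (s t : seq (R * M)) :
  lmod_axioms mul am -> tunital_lmod mul am ->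
  \sum_(p <- s) am p.1 p.2 = \sum_(p <- t) am p.1 p.2 -> tens_eq mul am s t.
Proof.
move=> HM [_ HMt] st.
have st0 : tens_eq mul am (s ++ formal_opp t) [::].
  apply: HMt; rewrite big_cat big_map /= st.
  under eq_bigr => p _ do rewrite (addmorphN (lmod_actDl HM p.2)).
  by rewrite sumrN subrr.
have e : tens_eq mul am (s ++ [::]) ((s ++ formal_opp t) ++ t).
  by rewrite -catA; apply/te_sym/te_catr/te_formal_oppl.
by rewrite cats0 in e; apply: te_trans e (te_catl t st0).
Qed.

Section Associativity.
Variables (R : zmodType) (mul : R -> R -> R).
Hypothesis HR : nuring_axioms mul.
Variables (N : zmodType) (an : N -> R -> N) (M : zmodType) (am : R -> M -> M).
Hypothesis HM : lmod_axioms mul am.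

Local Notation tact := (@tensR_act R mul N an).

Fact assoc_inner_balanced x : balanced an mul (fun n r => tens an am n (am r x)).
Proof.
by split=> *; rewrite ?tensDl ?(lmod_actDl HM) ?tensDr ?tens_bal ?(lmod_actA HM).
Qed.

Definition assoc_inner (x : M) (q : tensR mul an) : tensor an am :=
  tens_lift (fun n r => tens an am n (am r x)) q.

Lemma assoc_inner_tens x n r : assoc_inner x (tens an mul n r) = tens an am n (am r x).
Proof. exact: tens_lift_tens (assoc_inner_balanced x) n r. Qed.

Lemma assoc_innerD x : {morph assoc_inner x : q1 q2 / q1 + q2}.
Proof. exact: tens_liftD (assoc_inner_balanced x). Qed.

Fact assoc_balanced : balanced tact am (fun q x => assoc_inner x q).
Proof.
split=> [q1 q2 x|q x1 x2|q s x]; first exact: assoc_innerD.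
- move: q; apply: tensor_ext; first exact: assoc_innerD.
    by move=> a b; rewrite !assoc_innerD addrACA.
  by move=> n r; rewrite !assoc_inner_tens (lmod_actDr HM) tensDr.
- move: q; apply: tensor_ext.
  + exact: addmorph_comp (tensR_actDl HR s) (assoc_innerD x).
  + exact: assoc_innerD.
  + by move=> n r; rewrite tensR_act_tens // !assoc_inner_tens (lmod_actA HM).
Qed.

Definition tens_assoc (z : tensor tact am) : tensor an am :=
  tens_lift (fun q x => assoc_inner x q) z.

Lemma tens_assoc_tens q x : tens_assoc (tens tact am q x) = assoc_inner x q.
Proof. exact: tens_lift_tens assoc_balanced q x. Qed.

Lemma tens_assocD : {morph tens_assoc : z1 z2 / z1 + z2}.
Proof. exact: tens_liftD assoc_balanced. Qed.

Hypothesis HMt : tunital_lmod mul am.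

Definition tunital_dec (x : M) : seq (R * M) := projT1 (cid (HMt.1 x)).

Lemma tunital_decP x : x = \sum_(p <- tunital_dec x) am p.1 p.2.
Proof. exact: projT2 (cid (HMt.1 x)). Qed.

(** The inverse of [tens_assoc] sends [n (x) m] to [sum_i (n (x) r_i) (x) m_i]
    for any decomposition [m = sum_i r_i m_i]; t-unitality of [M] makes this
    independent of the decomposition ([unassoc_tensE]). *)
Section Unassoc.
Variable n : N.
Let psi (a : R) (y : M) := tens tact am (tens an mul n a) y.

Fact tens_tens_balanced : balanced mul am psi.
Proof.
by split=> *; rewrite /psi ?tensDr ?tensDl // -tensR_act_tens // tens_bal.
Qed.

Definition unassoc_tens (x : M) : tensor tact am :=
  \sum_(p <- tunital_dec x) psi p.1 p.2.

Lemma unassoc_tensE (s : seq (R * M)) :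
  unassoc_tens (\sum_(p <- s) am p.1 p.2) = \sum_(p <- s) psi p.1 p.2.
Proof.
apply/esym/te_balanced_sum; first exact: tens_tens_balanced.
exact/tunital_lmod_tens_eq/tunital_decP.
Qed.

End Unassoc.

Fact unassoc_balanced : balanced an am unassoc_tens.
Proof.
split=> [n1 n2 x|n x1 x2|n r x].
- by rewrite /unassoc_tens -big_split; apply: eq_bigr => p _; rewrite !tensDl.
- by rewrite (tunital_decP x1) (tunital_decP x2) -big_cat !unassoc_tensE big_cat.
- rewrite {2}(tunital_decP x) (addmorph_sum (lmod_actDr HM r)).
  under eq_bigr => p _ do rewrite -(lmod_actA HM).
  rewrite -(big_map (fun p => (mul r p.1, p.2)) xpredT (fun p => am p.1 p.2)).
  by rewrite unassoc_tensE big_map; apply: eq_bigr => p _; rewrite tens_bal.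
Qed.

Definition tens_unassoc (z : tensor an am) : tensor tact am :=
  tens_lift unassoc_tens z.

Lemma tens_unassocD : {morph tens_unassoc : z1 z2 / z1 + z2}.
Proof. exact: tens_liftD unassoc_balanced. Qed.

Lemma tens_unassocK : cancel tens_unassoc tens_assoc.
Proof.
apply: tensor_ext (addmorph_comp tens_unassocD tens_assocD) (fun _ _ => erefl) _.
move=> n x; rewrite [tens_unassoc _](tens_lift_tens unassoc_balanced).
rewrite /unassoc_tens (addmorph_sum tens_assocD).
under eq_bigr => p _ do rewrite tens_assoc_tens assoc_inner_tens.
by rewrite -(addmorph_sum (tensDr an am n)) -tunital_decP.
Qed.

Lemma tens_assocK : cancel tens_assoc tens_unassoc.
Proof.
apply: tensor_ext (addmorph_comp tens_assocD tens_unassocD) (fun _ _ => erefl) _.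
move=> q x; rewrite tens_assoc_tens; move: q; apply: tensor_ext.
- exact: addmorph_comp (assoc_innerD x) tens_unassocD.
- by move=> a b; rewrite tensDl.
- move=> n r; rewrite assoc_inner_tens [tens_unassoc _](tens_lift_tens unassoc_balanced).
  by have := unassoc_tensE n [:: (r, x)]; rewrite !big_seq1.
Qed.

End Associativity.

Section TensorRNaturality.
Variables (R : zmodType) (mul : R -> R -> R).
Hypothesis HR : nuring_axioms mul.
Variables (F : zmodType) (aF : R -> F -> F).
Hypothesis HF : lmod_axioms mul aF.

Lemma tens_assoc_tmap (N1 N2 : zmodType) (a1 : N1 -> R -> N1) (a2 : N2 -> R -> N2)
    (g : N1 -> N2) :
  rmod_morph a1 a2 g -> forall w : tensor (@tensR_act R mul N1 a1) aF,
  tens_assoc (tmap (@tensR_act R mul N2 a2) (tmap a2 g) w) = tmap a2 g (tens_assoc w).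
Proof.
move=> Hg; have Tg := tmap_morph HR Hg.
apply: tensor_ext.
- exact: addmorph_comp (tmapD Tg) (tens_assocD HR HF).
- exact: addmorph_comp (tens_assocD HR HF) (tmapD Hg).
move=> q x; rewrite (tmap_tens _ Tg) !(tens_assoc_tens HR HF); move: q.
apply: tensor_ext.
- exact: addmorph_comp (tmapD Hg) (assoc_innerD HF x).
- exact: addmorph_comp (assoc_innerD HF x) (tmapD Hg).
by move=> n r; rewrite (tmap_tens _ Hg) !(assoc_inner_tens _ HF) (tmap_tens _ Hg).
Qed.

Lemma tmap_tensR_mul (N : zmodType) (an : N -> R -> N) :
  rmod_axioms mul an ->
  forall w : tensor (@tensR_act R mul N an) aF, tmap an (@tensR_mul R mul N an) w = tens_assoc w.
Proof.
move=> HN; have Hmul := tensR_mul_morph HR HN.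
apply: tensor_ext; [exact: tmapD Hmul | exact: (tens_assocD HR (an := an) HF) |].
move=> q x; rewrite (tmap_tens _ Hmul) (tens_assoc_tens HR HF); move: q.
apply: tensor_ext.
- exact: addmorph_comp (tensR_mulD HN) (fun a b => tensDl _ _ a b x).
- exact: assoc_innerD HF x.
by move=> n r; rewrite tensR_mul_tens // (assoc_inner_tens _ HF) tens_bal.
Qed.

End TensorRNaturality.

Section CounitNaturality.
Variables (R : zmodType) (mul : R -> R -> R).
Hypothesis HR : nuring_axioms mul.
Variables (L N : zmodType) (aL : L -> R -> L) (an : N -> R -> N).
Hypotheses (HL : rmod_axioms mul aL) (HN : rmod_axioms mul an).
Variable phi : L -> tensR mul an.
Hypothesis Hphi : rmod_morph aL (@tensR_act R mul N an) phi.

Lemma tensR_mul_comp_morph : rmod_morph aL an (fun l => tensR_mul (phi l)).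
Proof. exact: rmod_morph_comp Hphi (tensR_mul_morph HR HN). Qed.

Lemma tmap_tensR_mul_comp (q : tensR mul aL) :
  tmap an (fun l => tensR_mul (phi l)) q = phi (tensR_mul q).
Proof.
move: q; apply: tensor_ext.
- exact: tmapD tensR_mul_comp_morph.
- exact: addmorph_comp (tensR_mulD HL) Hphi.1.
move=> n m; rewrite tmap_tens; last exact: tensR_mul_comp_morph.
by rewrite tens_tensR_mul // tensR_mul_tens // Hphi.2.
Qed.

End CounitNaturality.

Section TUnital.
Variables (R : zmodType) (mul : R -> R -> R).
Hypotheses (HR : nuring_axioms mul) (HRt : tunital_ring mul).

Lemma tensR_tunital (N : zmodType) (an : N -> R -> N) :
  tunital_rmod mul (@tensR_act R mul N an).
Proof.
have HRl := nuring_lmod HR.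
have assocD := tens_assocD HR (an := an) HRl.
have assoc_tens q r : tens_assoc (tens (@tensR_act R mul N an) mul q r) = tensR_act q r.
  by rewrite (tens_assoc_tens HR HRl).
split=> [q | s s0].
- exists (val (tens_unassoc HRt q)).
  rewrite -{1}(tens_unassocK HR HRl HRt q) {1}(tensor_sum (tens_unassoc _ q)).
  by rewrite (addmorph_sum assocD); apply: eq_bigr => p _; apply: assoc_tens.
- apply/tens_of_eq0/(can_inj (tens_assocK HR HRl HRt)).
  rewrite (addmorph0 assocD) tens_of_sum (addmorph_sum assocD) -[RHS]s0.
  by apply: eq_bigr => p _; apply: assoc_tens.
Qed.

Section TUnitalModule.
Variables (N : zmodType) (an : N -> R -> N).
Hypotheses (HN : rmod_axioms mul an) (HNt : tunital_rmod mul an).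

Lemma tensR_mul_inj : injective (@tensR_mul R mul N an).
Proof.
move=> q1 q2 e; apply/eqP; rewrite -subr_eq0 -[q1 - q2]tens_ofK; apply/eqP/tens_of_eq0.
have mulD := tensR_mulD HN.
apply: HNt.2; rewrite -(tensR_mul_of HN) tens_ofK mulD (addmorphN mulD) e.
exact: subrr.
Qed.

Lemma tensR_mul_inv :
  exists2 del : N -> tensR mul an,
    rmod_morph an (@tensR_act R mul N an) del & cancel del (@tensR_mul R mul N an).
Proof.
have [dec decP] := choice HNt.1.
pose del n := tens_of an mul (dec n).
have delK : cancel del (@tensR_mul R mul N an) by move=> n; rewrite tensR_mul_of // -decP.
exists del => //; split=> [x y | x r]; apply: tensR_mul_inj.
  by rewrite (tensR_mulD HN) !delK.
by rewrite tensR_mul_act // !delK.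
Qed.

End TUnitalModule.

Section TensorRKernel.
Variables (K N1 N2 : zmodType) (aK : K -> R -> K) (a1 : N1 -> R -> N1)
  (a2 : N2 -> R -> N2) (k : K -> N1) (f : N1 -> N2).
Hypotheses (HK : rmod_axioms mul aK) (H1 : rmod_axioms mul a1)
  (H2 : rmod_axioms mul a2).
Hypotheses (Hk : rmod_morph aK a1 k) (Hf : rmod_morph a1 a2 f).
Hypotheses (k_inj : injective k) (ker_im : forall y, f y = 0 <-> exists x, y = k x).

Lemma tmap_tkernel :
  is_tkernel_r mul (@tensR_act R mul K aK) (@tensR_act R mul N1 a1)
    (tmap a1 k) (tmap a2 f).
Proof.
split.
  apply: tensor_ext; first exact: addmorph_comp (tmapD Hk) (tmapD Hf).
    by move=> *; rewrite addr0.
  move=> n m; rewrite !tmap_tens //.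
  have /ker_im fkn0 : exists x, k n = k x by exists n.
  by rewrite fkn0 tens0l.
move=> L aL g HL HLt Hg fg0.
have [g' kg'] : {g' : L -> K & forall l, tensR_mul (g l) = k (g' l)}.
  apply: (@choice _ _ (fun l x => tensR_mul (g l) = k x)) => l; apply/ker_im.
  by rewrite -(tensR_mul_tmap Hf H1 H2) fg0 (addmorph0 (tensR_mulD H2)).
have Hg' : rmod_morph aL aK g'.
  split=> [x y | x r]; apply: k_inj.
    by rewrite Hk.1 -!kg' Hg.1 (tensR_mulD H1).
  by rewrite Hk.2 -!kg' Hg.2 tensR_mul_act.
have [del Hdel delK] := tensR_mul_inv HL HLt.
(* The factorization is [g' (x)_R R] after a section of the counit of [L]. *)
exists (fun l => tmap aK g' (del l)); split.
- exact: rmod_morph_comp Hdel (tmap_morph HR Hg').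
- move=> l; rewrite (tmap_comp Hg' Hk (tensR_mul_comp_morph HR H1 Hg)) => [|x]; last by rewrite kg'.
  by rewrite tmap_tensR_mul_comp // delK.
- move=> h' Hh' kh' l.
  have h'g' x : tensR_mul (h' x) = g' x.
    by apply: k_inj; rewrite -(tensR_mul_tmap Hk HK H1) kh' kg'.
  rewrite -{1}(delK l) -(tmap_tensR_mul_comp HR HL HK Hh').
  by congr tmap; apply: funext.
Qed.

End TensorRKernel.

End TUnital.

Section Unitization.
Variables (R : zmodType) (mul : R -> R -> R).

Lemma unitz_addE (x y : unitz R) : x + y = (x.1 + y.1, x.2 + y.2).
Proof. by []. Qed.

Lemma unitz_ractE (N : zmodType) (an : N -> R -> N) n z r :
  rt_ract an n (z, r) = n *~ z + an n r.
Proof. by []. Qed.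

Section UnitzModule.
Variables (N : zmodType) (an : N -> R -> N).
Hypothesis HN : rmod_axioms mul an.

Lemma unitz_ract_rmod : rmod_axioms (rt_mul mul) (rt_ract an).
Proof.
have [anA anDl anDr] := HN.
split=> [n [z1 r1] [z2 r2] | n1 n2 [z r] | n [z1 r1] [z2 r2]]; rewrite /rt_ract /=.
- rewrite !anDr !(addmorphMz (anDr n)) anDl (addmorphMz (fun x y => anDl x y r2)).
  rewrite anA mulrzDl mulrzA -!addrA; congr (_ + _).
  by rewrite [in RHS]addrC -!addrA; congr (_ + _); rewrite addrC.
- by rewrite mulrzDl anDl addrACA.
- by rewrite mulrzDr anDr addrACA.
Qed.

Lemma unitz_ract1 n : rt_ract an n (rt_one R) = n.
Proof. by rewrite /rt_ract mulr1z (addmorph0 (rmod_actDr HN n)) addr0. Qed.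

End UnitzModule.

Lemma unitz_ract_morph (N1 N2 : zmodType) (a1 : N1 -> R -> N1) (a2 : N2 -> R -> N2)
    (g : N1 -> N2) :
  rmod_morph a1 a2 g -> rmod_morph (rt_ract a1) (rt_ract a2) g.
Proof.
case=> gD gA; split=> // x r.
by rewrite /rt_ract gD gA (addmorphMz gD).
Qed.

Definition unitz_res (N : zmodType) (a : N -> unitz R -> N) (n : N) (r : R) : N :=
  a n (0, r).

Section Restriction.
Variables (N : zmodType) (a : N -> unitz R -> N).
Hypothesis Ha : rmod_axioms (rt_mul mul) a.

Lemma unitz_res_rmod : rmod_axioms mul (unitz_res a).
Proof.
have [aA aDl aDr] := Ha.
split=> [n r s | n1 n2 r | n r1 r2]; rewrite /unitz_res ?aDl //.
- by rewrite -aA /rt_mul /= mulr0 !mulr0z !add0r.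
- by rewrite -aDr unitz_addE /= addr0.
Qed.

Hypothesis Ha1 : forall n, a n (rt_one R) = n.

Lemma unitz_resE n z r : a n (z, r) = n *~ z + unitz_res a n r.
Proof.
have [_ _ aDr] := Ha.
have -> : (z, r) = (z, 0) + (0, r) :> unitz R by rewrite unitz_addE /= addr0 add0r.
rewrite aDr; congr (_ + _).
have aD : {morph (fun z => a n (z, 0)) : x y / x + y}.
  by move=> x y; rewrite -aDr unitz_addE /= addr0.
by rewrite -[z in LHS]intz (addmorphMz aD) Ha1.
Qed.

End Restriction.

Lemma unitz_res_morph (N1 N2 : zmodType) (a1 : N1 -> unitz R -> N1)
    (a2 : N2 -> unitz R -> N2) (g : N1 -> N2) :
  rmod_morph a1 a2 g -> rmod_morph (unitz_res a1) (unitz_res a2) g.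
Proof. by case=> gD gA; split=> // x r; rewrite /unitz_res gA. Qed.

(** Over the unitization, [(z, r)] acts as [z + r]; since [z] is an integer it
    moves freely across [(x)], so the two tensor products have the same
    relations. *)
Lemma tens_eq_unitz (N : zmodType) (an : N -> R -> N) (a : N -> unitz R -> N)
    (F : zmodType) (aF : R -> F -> F) :
  (forall n z r, a n (z, r) = n *~ z + an n r) ->
  tens_eq a (rt_lact aF) = tens_eq an aF.
Proof.
move=> aE; apply/funext => s; apply/funext => t; apply/propext.
split=> st; apply/tens_of_inj; rewrite !tens_of_sum.
- apply: (te_balanced_sum _ st); split=> [n1 n2 m|n m1 m2|n [z r] m].
  + exact: tensDl.
  + exact: tensDr.
  + by rewrite aE tensDl tensMz tens_bal /rt_lact /= tensDr.
- apply: (te_balanced_sum _ st); split=> [n1 n2 m|n m1 m2|n r m].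
  + exact: tensDl.
  + exact: tensDr.
  + have -> : an n r = a n (0, r) by rewrite aE mulr0z add0r.
    by rewrite tens_bal /rt_lact /= mulr0z add0r.
Qed.

End Unitization.

Definition is_kernel (A B C : zmodType) (u : A -> B) (v : B -> C) :=
  [/\ forall x, v (u x) = 0, forall x, u x = 0 -> x = 0 &
      forall y, v y = 0 -> exists x, u x = y].

Lemma addmorph_inj0 (U V : zmodType) (g : U -> V) :
  {morph g : x y / x + y} -> injective g -> forall x, g x = 0 -> x = 0.
Proof. by move=> gD g_inj x; rewrite -(addmorph0 gD) => /g_inj. Qed.

Lemma is_kernel_transport (A B C A' B' C' : zmodType) (u : A -> B) (v : B -> C)
    (u' : A' -> B') (v' : B' -> C') (alpha : A' -> A) (beta : B' -> B)
    (gamma : C' -> C) :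
  {morph alpha : x y / x + y} -> {morph beta : x y / x + y} ->
  {morph gamma : x y / x + y} ->
  bijective alpha -> injective beta -> injective gamma ->
  (forall x, u (alpha x) = beta (u' x)) -> (forall y, v (beta y) = gamma (v' y)) ->
  is_kernel u v -> is_kernel u' v'.
Proof.
move=> alphaD betaD gammaD [alpha' alphaK alphaK'] beta_inj gamma_inj uu' vv'.
move=> [vu0 u_inj0 kerv]; split.
- by move=> x; apply: (addmorph_inj0 gammaD gamma_inj); rewrite -vv' -uu' vu0.
- move=> x u'x0; apply: (addmorph_inj0 alphaD (can_inj alphaK)); apply: u_inj0.
  by rewrite uu' u'x0 (addmorph0 betaD).
- move=> y v'y0; have /kerv [x ux] : v (beta y) = 0.
    by rewrite vv' v'y0 (addmorph0 gammaD).
  by exists (alpha' x); apply: beta_inj; rewrite -uu' alphaK' ux.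
Qed.

Definition tens_exact_l (R : zmodType) (K N1 N2 M : zmodType) (aK : K -> R -> K)
    (a1 : N1 -> R -> N1) (a2 : N2 -> R -> N2) (am : R -> M -> M)
    (k : K -> N1) (f : N1 -> N2) :=
  [/\ forall t, tens_eq a2 am (tmapl f (tmapl k t)) [::],
      forall t, tens_eq a1 am (tmapl k t) [::] -> tens_eq aK am t [::] &
      forall s, tens_eq a2 am (tmapl f s) [::] ->
        exists t, tens_eq a1 am (tmapl k t) s].

Lemma tens_exact_lE (R : zmodType) (K N1 N2 M : zmodType) (aK : K -> R -> K)
    (a1 : N1 -> R -> N1) (a2 : N2 -> R -> N2) (am : R -> M -> M)
    (k : K -> N1) (f : N1 -> N2) :
  rmod_morph aK a1 k -> rmod_morph a1 a2 f ->
  tens_exact_l aK a1 a2 am k f <->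
  is_kernel (tmap a1 k : tensor aK am -> _) (tmap a2 f).
Proof.
move=> Hk Hf; have mapk := tmap_of am Hk; have mapf := tmap_of am Hf.
split=> -[fk0 k_inj kerv]; split.
- by move=> q; rewrite -[q]tens_ofK mapk mapf; apply/tens_of_eq0.
- by move=> q; rewrite -[q]tens_ofK mapk => /tens_of_eq0/k_inj/tens_of_eq0.
- move=> q; rewrite -[q]tens_ofK mapf => /tens_of_eq0/kerv [t /tens_of_eq st].
  by exists (tens_of aK am t); rewrite mapk.
- by move=> t; apply/tens_of_eq0; rewrite -mapf -mapk.
- by move=> t /tens_of_eq0; rewrite -mapk => /k_inj/tens_of_eq0.
- move=> s /tens_of_eq0; rewrite -mapf => /kerv [q kq]; exists (val q).
  by apply/tens_of_inj; rewrite -mapk tens_ofK.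
Qed.

(** Membership is stated without using additivity of [f], so that the
    [zmodType] instance of [kerf f] depends on [f] alone; for additive [f] it
    means [f y = 0] (lemma [ker_predE]). *)
Section KernelSubgroup.
Variables (N1 N2 : zmodType) (f : N1 -> N2).

Definition ker_pred : {pred N1} := fun y => `[< forall z, f (y + z) = f z >].

Fact ker_zmod_closed : zmod_closed ker_pred.
Proof.
split=> [|y1 y2]; rewrite /ker_pred /in_mem /=.
  by apply/asboolP => z; rewrite add0r.
move=> /asboolP fy1 /asboolP fy2; apply/asboolP => z.
by rewrite -addrA fy1 -(fy2 (- y2 + z)) addrA subrr add0r.
Qed.

HB.instance Definition _ := GRing.isZmodClosed.Build N1 ker_pred ker_zmod_closed.

Inductive kerf : predArgType := KerElt y of y \in ker_pred.
Definition ker_val (w : kerf) : N1 := let: KerElt y _ := w in y.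
HB.instance Definition _ := [isSub of kerf for ker_val].
HB.instance Definition _ := [Choice of kerf by <:].
HB.instance Definition _ := [SubChoice_isSubZmodule of kerf by <:].

Hypothesis fD : {morph f : x y / x + y}.

Lemma ker_predE y : (y \in ker_pred) = (f y == 0).
Proof.
rewrite /ker_pred /in_mem /=.
apply/asboolP/eqP => [fy | fy0 z]; last by rewrite fD fy0 add0r.
by rewrite -[y]addr0 fy (addmorph0 fD).
Qed.

Lemma ker_valP y : f y = 0 <-> exists w : kerf, y = val w.
Proof.
split=> [/eqP | [w ->]]; last by apply/eqP; rewrite -ker_predE; apply: valP.
by rewrite -ker_predE => fy; exists (Sub y fy); rewrite SubK.
Qed.

End KernelSubgroup.

Section KernelSubmodule.
Variables (S : zmodType) (smul : S -> S -> S).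
Variables (N1 N2 : zmodType) (a1 : N1 -> S -> N1) (a2 : N2 -> S -> N2) (f : N1 -> N2).
Hypotheses (H1 : rmod_axioms smul a1) (H2 : rmod_axioms smul a2).
Hypothesis Hf : rmod_morph a1 a2 f.

Definition ker_act (w : kerf f) (r : S) : kerf f := insubd w (a1 (val w) r).

Lemma ker_act_val w r : val (ker_act w r) = a1 (val w) r.
Proof.
apply: insubdK; rewrite (ker_predE Hf.1) Hf.2.
have := valP w; rewrite (ker_predE Hf.1) => /eqP ->.
by rewrite (addmorph0 (rmod_actDl H2 r)).
Qed.

Lemma ker_act_rmod : rmod_axioms smul ker_act.
Proof.
have [a1A a1Dl a1Dr] := H1.
by split=> *; apply: val_inj; rewrite /= !ker_act_val ?a1A ?a1Dl ?a1Dr.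
Qed.

Lemma ker_act_unital (one : S) :
  (forall y, a1 y one = y) -> forall w, ker_act w one = w.
Proof. by move=> a1one w; apply: val_inj; rewrite ker_act_val. Qed.

Lemma ker_val_morph : rmod_morph ker_act a1 val.
Proof. by split=> // w r; rewrite ker_act_val. Qed.

End KernelSubmodule.

Section TensorTUnital.
Variables (R : zmodType) (mul : R -> R -> R).
Hypotheses (HR : nuring_axioms mul) (HRt : tunital_ring mul).
Variables (F : zmodType) (aF : R -> F -> F).
Hypotheses (HF : lmod_axioms mul aF) (HFt : tunital_lmod mul aF).

Lemma tens_unassoc_tmap (N1 N2 : zmodType) (a1 : N1 -> R -> N1) (a2 : N2 -> R -> N2)
    (g : N1 -> N2) :
  rmod_morph a1 a2 g -> forall z : tensor a1 aF,
  tens_unassoc HFt (tmap a2 g z) =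
    tmap (@tensR_act R mul N2 a2) (tmap a2 g) (tens_unassoc HFt z).
Proof.
move=> Hg z; apply: (can_inj (tens_assocK HR HF HFt)).
by rewrite tens_unassocK // tens_assoc_tmap // tens_unassocK.
Qed.

Section CounitInverse.
Variables (K L : zmodType) (aK : K -> R -> K) (aL : L -> R -> L).
Hypotheses (HK : rmod_axioms mul aK) (HL : rmod_axioms mul aL).
Variables (j : K -> L) (h : tensR mul aL -> K).
Hypotheses (Hj : rmod_morph aK aL j) (Hh : rmod_morph (@tensR_act R mul L aL) aK h).
Hypotheses (jh : forall q, j (h q) = tensR_mul q)
  (hj : forall q : tensR mul aK, h (tmap aL j q) = tensR_mul q).

(** [- (x)_R F] factors through [- (x)_R R] via [tens_assoc], and [h] inverts
    [j (x)_R R] up to the counits. *)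
Lemma tmap_bij_of_counit : bijective (tmap aL j : tensor aK aF -> tensor aL aF).
Proof.
exists (fun u => tmap aK h (tens_unassoc HFt u)) => [z | u].
- rewrite tens_unassoc_tmap // (tmap_comp (tmap_morph HR Hj) Hh (tensR_mul_morph HR HK) hj).
  by rewrite tmap_tensR_mul // tens_unassocK.
- rewrite (tmap_comp Hh Hj (tensR_mul_morph HR HL) jh).
  by rewrite tmap_tensR_mul // tens_unassocK.
Qed.

End CounitInverse.

Lemma tkernel_tmap_bij (K L N1 N2 : zmodType) (aK : K -> R -> K) (aL : L -> R -> L)
    (a1 : N1 -> R -> N1) (k : K -> N1) (f : N1 -> N2) (m : L -> N1) (j : K -> L) :
  rmod_axioms mul aK -> rmod_axioms mul aL ->
  rmod_morph aK a1 k -> rmod_morph aL a1 m -> rmod_morph aK aL j ->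
  injective m -> (forall x, m (j x) = k x) -> (forall y, f (m y) = 0) ->
  is_tkernel_r mul aK a1 k f ->
  bijective (tmap aL j : tensor aK aF -> tensor aL aF).
Proof.
move=> HK HL Hk Hm Hj m_inj mj fm0 [fk0 kerU].
have [h [Hh kh _]] := kerU _ _ (fun q => m (tensR_mul q)) (tensR_act_rmod HR aL)
  (tensR_tunital HR HRt aL) (rmod_morph_comp (tensR_mul_morph HR HL) Hm) (fun q => fm0 _).
have [h0 [_ _ uniq]] := kerU _ _ (fun q => k (tensR_mul q)) (tensR_act_rmod HR aK)
  (tensR_tunital HR HRt aK) (rmod_morph_comp (tensR_mul_morph HR HK) Hk) (fun q => fk0 _).
(* [h] factors [m] after the counit through [k]; uniqueness of such
   factorizations identifies [h] after [j (x)_R R] with the counit of [K]. *)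
apply: (tmap_bij_of_counit HK HL Hj Hh) => q.
  by apply: m_inj; rewrite mj kh.
rewrite (uniq _ (rmod_morph_comp (tmap_morph HR Hj) Hh)) => [|x].
  by rewrite (uniq _ (tensR_mul_morph HR HK)).
by rewrite kh tensR_mul_tmap // mj.
Qed.

End TensorTUnital.

Section LeftFlatness.
Variables (R : zmodType) (mul : R -> R -> R).
Hypotheses (HR : nuring_axioms mul) (HRt : tunital_ring mul).
Variables (F : zmodType) (aF : R -> F -> F).
Hypotheses (HF : lmod_axioms mul aF) (HFt : tunital_lmod mul aF).

Lemma flat_of_tflat_l : tflat_l mul aF -> flat_l (rt_mul mul) (rt_one R) (rt_lact aF).
Proof.
move=> Htf K N1 N2 aK a1 a2 k f HK H1 H2 uK u1 u2 Hk Hf k_inj ker_im.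
have HbK := unitz_res_rmod HK; have Hb1 := unitz_res_rmod H1.
have Hb2 := unitz_res_rmod H2.
have Hk' := unitz_res_morph Hk; have Hf' := unitz_res_morph Hf.
rewrite (tens_eq_unitz aF (unitz_resE HK uK)) (tens_eq_unitz aF (unitz_resE H1 u1)).
rewrite (tens_eq_unitz aF (unitz_resE H2 u2)).
have Tker := tmap_tkernel HR HbK Hb1 Hb2 Hk' Hf' k_inj ker_im.
have := Htf _ _ _ _ _ _ _ _ (tensR_act_rmod HR _) (tensR_act_rmod HR _)
  (tensR_act_rmod HR _) (tensR_tunital HR HRt _) (tensR_tunital HR HRt _)
  (tensR_tunital HR HRt _) (tmap_morph HR Hk') (tmap_morph HR Hf') Tker.
move/(tens_exact_lE aF (tmap_morph HR Hk') (tmap_morph HR Hf')).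
have unassoc_bij (N : zmodType) (an : N -> R -> N) :=
  Bijective (tens_unassocK HR (an := an) HF HFt) (tens_assocK HR HF HFt).
have unassocD (N : zmodType) (an : N -> R -> N) := tens_unassocD HR (an := an) HF HFt.
move/(is_kernel_transport (unassocD _ _) (unassocD _ _) (unassocD _ _)
  (unassoc_bij _ _) (bij_inj (unassoc_bij _ _)) (bij_inj (unassoc_bij _ _))
  (fun w => esym (tens_unassoc_tmap HR HF HFt Hk' w))
  (fun w => esym (tens_unassoc_tmap HR HF HFt Hf' w))).
by move/(tens_exact_lE aF Hk' Hf').
Qed.

Section UnitzKernel.
Variables (N1 N2 : zmodType) (a1 : N1 -> R -> N1) (a2 : N2 -> R -> N2) (f : N1 -> N2).
Hypotheses (H1 : rmod_axioms mul a1) (H2 : rmod_axioms mul a2).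
Hypothesis Hf : rmod_morph a1 a2 f.
Local Notation ka := (ker_act (rt_ract a1) (f := f)).
Let H2' := unitz_ract_rmod H2.
Let Hf' := unitz_ract_morph Hf.

Lemma unitz_ker_rmod : rmod_axioms (rt_mul mul) ka.
Proof. exact: ker_act_rmod (unitz_ract_rmod H1) H2' Hf'. Qed.

Lemma unitz_ker_unital w : ka w (rt_one R) = w.
Proof. exact: (ker_act_unital H2' Hf' (one := rt_one R) (unitz_ract1 H1) w). Qed.

Lemma unitz_ker_val_morph : rmod_morph (unitz_res ka) a1 val.
Proof.
split=> // w r.
by rewrite /unitz_res (ker_act_val H2' Hf') /rt_ract mulr0z add0r.
Qed.

Hypothesis Hfl : flat_l (rt_mul mul) (rt_one R) (rt_lact aF).

Lemma flat_l_ker_val :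
  is_kernel (tmap a1 val : tensor (unitz_res ka) aF -> _) (tmap a2 f).
Proof.
have := @Hfl (kerf f) N1 N2 ka (rt_ract a1) (rt_ract a2) val f unitz_ker_rmod
  (unitz_ract_rmod H1) H2' unitz_ker_unital (unitz_ract1 H1) (unitz_ract1 H2)
  (ker_val_morph H2' Hf') Hf' val_inj (ker_valP Hf.1).
rewrite (tens_eq_unitz aF (unitz_resE unitz_ker_rmod unitz_ker_unital)).
rewrite (tens_eq_unitz aF (unitz_ractE a1)) (tens_eq_unitz aF (unitz_ractE a2)).
by move/(tens_exact_lE aF unitz_ker_val_morph Hf).
Qed.

End UnitzKernel.

Lemma tflat_of_flat_l : flat_l (rt_mul mul) (rt_one R) (rt_lact aF) -> tflat_l mul aF.
Proof.
move=> Hfl K N1 N2 aK a1 a2 k f HK H1 H2 uK u1 u2 Hk Hf [fk0 kerU].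
have Hval := unitz_ker_val_morph H2 Hf.
have [j jk] := choice (fun x => proj1 (ker_valP Hf.1 (k x)) (fk0 x)).
have Hj : rmod_morph aK (unitz_res (ker_act (rt_ract a1) (f := f))) j.
  have [kD kA] := Hk; have [_ valA] := Hval.
  by split=> [x y | x r]; apply: val_inj; rewrite ?GRing.valD ?valA -!jk ?kD ?kA.
have j_bij := tkernel_tmap_bij HR HRt HF HFt HK (unitz_res_rmod (unitz_ker_rmod H1 H2 Hf))
  Hk Hval Hj val_inj (fun x => esym (jk x))
  (fun w => proj2 (ker_valP Hf.1 _) (ex_intro _ w erefl)) (conj fk0 kerU).
apply/(tens_exact_lE aF Hk Hf).
apply: (is_kernel_transport (beta := id) (gamma := id) (tmapD Hj) _ _ j_bij
  (@inj_id _) (@inj_id _) _ _ (flat_l_ker_val H1 H2 Hf Hfl)) => // q.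
by rewrite (tmap_comp Hj Hval Hk (fun x => esym (jk x))).
Qed.

End LeftFlatness.

Definition conv_mul (S : Type) (smul : S -> S -> S) (x y : S) := smul y x.
Definition ract_of_lact (S M : Type) (a : S -> M -> M) (m : M) (r : S) := a r m.
Definition lact_of_ract (S N : Type) (a : N -> S -> N) (r : S) (n : N) := a n r.
Definition tswap (A B : Type) (s : seq (A * B)) := map (fun p => (p.2, p.1)) s.

Lemma tswapK (A B : Type) (s : seq (A * B)) : tswap (tswap s) = s.
Proof. by elim: s => [|[a b] s IH] //=; rewrite IH. Qed.

Lemma tswap_tmapr (A B C : Type) (g : B -> C) (s : seq (A * B)) :
  tswap (tmapr g s) = tmapl g (tswap s).
Proof. by rewrite /tswap /tmapr /tmapl -!map_comp. Qed.

Lemma tswap_tmapl (A B C : Type) (g : A -> C) (s : seq (A * B)) :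
  tswap (tmapl g s) = tmapr g (tswap s).
Proof. by rewrite /tswap /tmapr /tmapl -!map_comp. Qed.

Lemma te_tswap (S : Type) (N M : zmodType) (an : N -> S -> N) (am : S -> M -> M) s t :
  tens_eq an am s t ->
  tens_eq (ract_of_lact am) (lact_of_ract an) (tswap s) (tswap t).
Proof.
elim=> {s t} [s|s t _|s t u _ IH1 _ IH2|s1 s2 t1 t2 _ IH1 _ IH2|s t|m|n1 n2 m|n m1 m2|n r m].
- exact: te_refl.
- exact: te_sym.
- exact: te_trans IH1 IH2.
- by rewrite /tswap !map_cat; apply: te_cat.
- by rewrite /tswap !map_cat; apply: te_comm.
- exact/tens_of_eq0/tens0r.
- exact: te_addr.
- exact: te_addl.
- exact/te_sym/te_bal.
Qed.

Section Converse.
Variables (S : zmodType) (smul : S -> S -> S).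
Local Notation smul' := (conv_mul smul).

Lemma conv_nuring : nuring_axioms smul -> nuring_axioms smul'.
Proof.
case=> mulA [mulDl mulDr]; split=> [x y z|]; first by rewrite /conv_mul mulA.
by split=> x y z; rewrite /conv_mul ?mulDl ?mulDr.
Qed.

Lemma conv_rmod (M : zmodType) (a : S -> M -> M) :
  lmod_axioms smul a -> rmod_axioms smul' (ract_of_lact a).
Proof. by case=> aA aDr aDl; split=> *; rewrite /ract_of_lact /conv_mul ?aA ?aDr ?aDl. Qed.

Lemma conv_lmod (N : zmodType) (a : N -> S -> N) :
  rmod_axioms smul a -> lmod_axioms smul' (lact_of_ract a).
Proof. by case=> aA aDl aDr; split=> *; rewrite /lact_of_ract /conv_mul ?aA ?aDr ?aDl. Qed.

Lemma conv_tunital_rmod (M : zmodType) (a : S -> M -> M) :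
  tunital_lmod smul a -> tunital_rmod smul' (ract_of_lact a).
Proof.
case=> a_onto a_inj; split=> [m | s s0].
  by have [s ->] := a_onto m; exists (tswap s); rewrite big_map.
by rewrite -[s]tswapK; apply: (te_tswap (t := [::])); apply: a_inj; rewrite big_map.
Qed.

Lemma conv_tunital_lmod (N : zmodType) (a : N -> S -> N) :
  tunital_rmod smul a -> tunital_lmod smul' (lact_of_ract a).
Proof.
case=> a_onto a_inj; split=> [m | s s0].
  by have [s ->] := a_onto m; exists (tswap s); rewrite big_map.
by rewrite -[s]tswapK; apply: (te_tswap (t := [::])); apply: a_inj; rewrite big_map.
Qed.

Lemma conv_rmod_morph (M1 M2 : zmodType) (a1 : S -> M1 -> M1) (a2 : S -> M2 -> M2) g :
  lmod_morph a1 a2 g -> rmod_morph (ract_of_lact a1) (ract_of_lact a2) g.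
Proof. by case=> gD gA; split=> // x r; apply: gA. Qed.

Lemma conv_lmod_morph (N1 N2 : zmodType) (a1 : N1 -> S -> N1) (a2 : N2 -> S -> N2) g :
  rmod_morph a1 a2 g -> lmod_morph (lact_of_ract a1) (lact_of_ract a2) g.
Proof. by case=> gD gA; split=> // x r; apply: gA. Qed.

End Converse.

Lemma conv_tkernel_l (S : zmodType) (smul : S -> S -> S) (K N1 N2 : zmodType)
    (aK : K -> S -> K) (a1 : N1 -> S -> N1)
    (k : K -> N1) (f : N1 -> N2) :
  is_tkernel_r smul aK a1 k f ->
  is_tkernel_l (conv_mul smul) (lact_of_ract aK) (lact_of_ract a1) k f.
Proof.
case=> fk0 kerU; split=> // L aL g HL HLt Hg fg0.
have [h [Hh kh h_uniq]] := kerU L (ract_of_lact aL) g (conv_rmod HL)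
  (conv_tunital_rmod HLt) (conv_rmod_morph Hg) fg0.
exists h; split=> // [|h' Hh']; first exact: conv_lmod_morph.
exact/h_uniq/conv_rmod_morph.
Qed.

Lemma conv_tkernel_r (S : zmodType) (smul : S -> S -> S) (K M1 M2 : zmodType)
    (aK : S -> K -> K) (a1 : S -> M1 -> M1)
    (k : K -> M1) (f : M1 -> M2) :
  is_tkernel_l smul aK a1 k f ->
  is_tkernel_r (conv_mul smul) (ract_of_lact aK) (ract_of_lact a1) k f.
Proof.
case=> fk0 kerU; split=> // L aL g HL HLt Hg fg0.
have [h [Hh kh h_uniq]] := kerU L (lact_of_ract aL) g (conv_lmod HL)
  (conv_tunital_lmod HLt) (conv_lmod_morph Hg) fg0.
exists h; split=> // [|h' Hh']; first exact: conv_rmod_morph.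
exact/h_uniq/conv_lmod_morph.
Qed.


Definition tens_exact_r (R : zmodType) (K M1 M2 N : zmodType) (aF : N -> R -> N)
    (aK : R -> K -> K) (a1 : R -> M1 -> M1) (a2 : R -> M2 -> M2)
    (k : K -> M1) (f : M1 -> M2) :=
  [/\ forall t, tens_eq aF a2 (tmapr f (tmapr k t)) [::],
      forall t, tens_eq aF a1 (tmapr k t) [::] -> tens_eq aF aK t [::] &
      forall s, tens_eq aF a2 (tmapr f s) [::] ->
        exists t, tens_eq aF a1 (tmapr k t) s].

Lemma tens_exact_r_swap (R : zmodType) (K M1 M2 N : zmodType) (aF : N -> R -> N)
    (aK : R -> K -> K) (a1 : R -> M1 -> M1) (a2 : R -> M2 -> M2)
    (k : K -> M1) (f : M1 -> M2) :
  tens_exact_r aF aK a1 a2 k f <->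
  tens_exact_l (ract_of_lact aK) (ract_of_lact a1) (ract_of_lact a2)
    (lact_of_ract aF) k f.
Proof.
split=> -[fk0 k_inj kerv]; split.
- by move=> t; move/te_tswap: (fk0 (tswap t)); rewrite !tswap_tmapr tswapK.
- move=> t /te_tswap; rewrite tswap_tmapl => /k_inj/te_tswap.
  by rewrite tswapK.
- move=> s /te_tswap; rewrite tswap_tmapl => /kerv [t /te_tswap].
  by rewrite tswap_tmapr tswapK; exists (tswap t).
- by move=> t; move/te_tswap: (fk0 (tswap t)); rewrite !tswap_tmapl tswapK.
- move=> t /te_tswap; rewrite tswap_tmapr => /k_inj/te_tswap.
  by rewrite tswapK.
- move=> s /te_tswap; rewrite tswap_tmapr => /kerv [t /te_tswap].
  by rewrite tswap_tmapl tswapK; exists (tswap t).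
Qed.

Lemma tflat_r_conv (S : zmodType) (smul : S -> S -> S) (F : zmodType)
    (aF : F -> S -> F) :
  tflat_r smul aF <-> tflat_l (conv_mul smul) (lact_of_ract aF).
Proof.
split=> Hflat K N1 N2 aK a1 a2 k f HK H1 H2 uK u1 u2 Hk Hf Hker.
- apply/tens_exact_r_swap.
  exact: Hflat (conv_lmod HK) (conv_lmod H1) (conv_lmod H2) (conv_tunital_lmod uK)
    (conv_tunital_lmod u1) (conv_tunital_lmod u2) (conv_lmod_morph Hk)
    (conv_lmod_morph Hf) (conv_tkernel_l Hker).
- apply/tens_exact_r_swap.
  exact: Hflat (conv_rmod HK) (conv_rmod H1) (conv_rmod H2) (conv_tunital_rmod uK)
    (conv_tunital_rmod u1) (conv_tunital_rmod u2) (conv_rmod_morph Hk)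
    (conv_rmod_morph Hf) (conv_tkernel_r Hker).
Qed.

Lemma flat_r_conv (S : zmodType) (smul : S -> S -> S) (one : S) (F : zmodType)
    (aF : F -> S -> F) :
  flat_r smul one aF <-> flat_l (conv_mul smul) one (lact_of_ract aF).
Proof.
split=> Hflat K N1 N2 aK a1 a2 k f HK H1 H2 uK u1 u2 Hk Hf k_inj ker_im.
- apply/tens_exact_r_swap.
  exact: Hflat (conv_lmod HK) (conv_lmod H1) (conv_lmod H2) uK u1 u2
    (conv_lmod_morph Hk) (conv_lmod_morph Hf) k_inj ker_im.
- apply/tens_exact_r_swap.
  exact: Hflat (conv_rmod HK) (conv_rmod H1) (conv_rmod H2) uK u1 u2
    (conv_rmod_morph Hk) (conv_rmod_morph Hf) k_inj ker_im.
Qed.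

Lemma rt_mul_conv (R : zmodType) (mul : R -> R -> R) :
  rt_mul (conv_mul mul) = conv_mul (rt_mul mul).
Proof.
apply/funext => x; apply/funext => y; rewrite /rt_mul /conv_mul.
by congr (_, _); [rewrite mulrC | rewrite [_ + y.2 *~ _]addrC].
Qed.

Lemma tflat_l_flat (R : zmodType) (mul : R -> R -> R) (F : zmodType) (aF : R -> F -> F) :
  nuring_axioms mul -> tunital_ring mul -> lmod_axioms mul aF -> tunital_lmod mul aF ->
  tflat_l mul aF <-> flat_l (rt_mul mul) (rt_one R) (rt_lact aF).
Proof.
move=> HR HRt HF HFt.
by split; [apply: flat_of_tflat_l | apply: tflat_of_flat_l].
Qed.

Theorem corollary8p20 (R : zmodType) (mul : R -> R -> R) :
  nuring_axioms mul -> tunital_ring mul ->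
  (forall (F : zmodType) (aF : R -> F -> F),
     lmod_axioms mul aF -> tunital_lmod mul aF ->
     (tflat_l mul aF <-> flat_l (rt_mul mul) (rt_one R) (rt_lact aF))) /\
  (forall (F : zmodType) (aF : F -> R -> F),
     rmod_axioms mul aF -> tunital_rmod mul aF ->
     (tflat_r mul aF <-> flat_r (rt_mul mul) (rt_one R) (rt_ract aF))).
Proof.
move=> HR HRt; split=> [F aF HF HFt | F aF HF HFt]; first exact: tflat_l_flat.
(* Over the converse ring, [HRt] is read on the right and [rt_lact] of the
   converted action is, by definition, the converted [rt_ract]. *)
apply: iff_trans (tflat_r_conv _ _) _.
apply: iff_trans (tflat_l_flat (conv_nuring HR) (conv_tunital_rmod HRt) (conv_lmod HF)
  (conv_tunital_lmod HFt)) _.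
by rewrite rt_mul_conv; apply: iff_sym (flat_r_conv _ _ _).
Qed.
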